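(* Let $\lambda$ be a singular cardinal. Then $\mathfrak{d}_\lambda>\lambda$, and moreover $\operatorname{cf}(\mathfrak{d}_\lambda)>\lambda$.
   Context: For $f,g\in{}^\lambda\lambda$, $f\le^* g$ means $|\{\beta<\lambda:f(\beta)>g(\beta)\}|<\lambda$ (size less than $\lambda$, not merely bounded). $\mathfrak{d}_\lambda$ is the minimal cardinality of a family $\mathcal{D}\subseteq{}^\lambda\lambda$ such that every $f\in{}^\lambda\lambda$ satisfies $f\le^* g$ for some $g\in\mathcal{D}$. *)

(* cardinals are modelled by types, compared via injections. *)
From Stdlib Require Import Relations Wellfounded.

Definition card_le (A B : Type) : Prop := exists f : A -> B, forall x y, f x = f y -> x = y.
Definition card_lt (A B : Type) : Prop := card_le A B /\ ~ card_le B A.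

(* lt is a well-order on L making (L, lt) an initial ordinal, i.e. a cardinal:
   every proper initial segment has strictly smaller cardinality. *)
Definition initial_ordinal {L : Type} (lt : L -> L -> Prop) : Prop :=
  well_founded lt /\
  (forall x, ~ lt x x) /\
  (forall x y z, lt x y -> lt y z -> lt x z) /\
  (forall x y, lt x y \/ x = y \/ lt y x) /\
  (forall x, card_lt {y : L | lt y x} L).

Definition cofinal {L : Type} (lt : L -> L -> Prop) (S : L -> Prop) : Prop :=
  forall x, exists y, S y /\ (x = y \/ lt x y).

Definition singular {L : Type} (lt : L -> L -> Prop) : Prop :=
  card_le nat L /\ exists S : L -> Prop, cofinal lt S /\ card_lt {y : L | S y} L.

Definition le_star {L : Type} (lt : L -> L -> Prop) (f g : L -> L) : Prop :=
  card_lt {b : L | lt (g b) (f b)} L.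

Definition dominating {L : Type} (lt : L -> L -> Prop) (D : (L -> L) -> Prop) : Prop :=
  forall f, exists g, D g /\ le_star lt f g.

(* Hessenberg's theorem |L * L| = |L| splits L into |L| disjoint blocks of size |L|.  Given at most
   |L| functions, one per block, a function exceeding the i-th one on the i-th block is not
   dominated by any of them; hence d_L > |L|.  For the cofinality: let S be a cofinal subset of a
   dominating family D of size d_L, well-ordered in type d_L, with |S| <= |L|, and give each s in S
   a block.  The members of D below s, read on the block of s, form fewer than d_L functions, so
   some K_s escapes all of them; a function above both K_s and s on the block of s then escapes
   every member of D. *)

From Stdlib Require Import Wellfounded Classical ClassicalEpsilon ProofIrrelevance
  FunctionalExtensionality PeanoNat Lia.

Definition injective {A B} (f : A -> B) : Prop := forall x y, f x = f y -> x = y.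

Lemma proj1_sig_inj {A} {P : A -> Prop} (u v : {x | P x}) : proj1_sig u = proj1_sig v -> u = v.
Proof. exact (eq_sig_hprop (fun x => proof_irrelevance (P x)) u v). Qed.

Lemma card_le_refl A : card_le A A.
Proof. exists (fun x => x); auto. Qed.

Lemma card_le_trans A B C : card_le A B -> card_le B C -> card_le A C.
Proof. intros [f Hf] [g Hg]; exists (fun x => g (f x)); auto. Qed.

Lemma card_le_sig {T} (P : T -> Prop) : card_le {x | P x} T.
Proof. exists (@proj1_sig _ _); exact proj1_sig_inj. Qed.

Lemma card_le_subset {T} (P Q : T -> Prop) : (forall x, P x -> Q x) -> card_le {x | P x} {x | Q x}.
Proof.
  intros PQ. exists (fun x => exist Q (proj1_sig x) (PQ _ (proj2_sig x))).
  intros a b E. apply proj1_sig_inj. exact (f_equal (@proj1_sig _ _) E).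
Qed.

Lemma card_le_prod A B C D : card_le A C -> card_le B D -> card_le (A * B) (C * D).
Proof.
  intros [f Hf] [g Hg]. exists (fun p => (f (fst p), g (snd p))).
  intros [a b] [a' b'] E; injection E as Ea Eb; f_equal; auto.
Qed.

Lemma card_le_of_not_lt {T} (P : T -> Prop) : ~ card_lt {x | P x} T -> card_le T {x | P x}.
Proof. intros H. apply NNPP; intro N. apply H. split; [apply card_le_sig | exact N]. Qed.

Lemma card_le_image {X Y} (P : X -> Prop) (F : X -> Y) :
  card_le {y | exists x, P x /\ y = F x} {x | P x}.
Proof.
  pose (pick := fun y : {y | exists x, P x /\ y = F x} =>
                  constructive_indefinite_description _ (proj2_sig y)).
  exists (fun y => exist P _ (proj1 (proj2_sig (pick y)))).
  intros a b E. apply (f_equal (@proj1_sig _ _)) in E; simpl in E.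
  apply proj1_sig_inj. rewrite (proj2 (proj2_sig (pick a))), (proj2 (proj2_sig (pick b))), E.
  reflexivity.
Qed.

Lemma exists_extension {X Y Z} (u : X -> Y) (P : X -> Z -> Prop) :
  injective u -> inhabited Z -> (forall x, exists z, P x z) ->
  exists f : Y -> Z, forall x, P x (f (u x)).
Proof.
  intros Hu [z0] HP. destruct (choice _ HP) as [F HF].
  exists (fun y => match excluded_middle_informative (exists x, u x = y) with
                   | left H => F (proj1_sig (constructive_indefinite_description _ H))
                   | right _ => z0 end).
  intro x. destruct excluded_middle_informative as [H|H]; [|exfalso; eauto].
  destruct (constructive_indefinite_description _ H) as [x' Hx']; simpl.
  rewrite (Hu _ _ Hx'). apply HF.
Qed.

(* Hilbert's hotel: shift the copy of [nat] inside [X] by one to make room. *)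
Lemma card_le_option {X} : card_le nat X -> card_le (option X) X.
Proof.
  intros [j Hj].
  destruct (exists_extension j (fun n k => k = n) Hj (inhabits 0)) as [jinv Hjinv]; [eauto|].
  exists (fun o => match o with
                   | None => j 0
                   | Some x => if excluded_middle_informative (exists n, j n = x)
                               then j (S (jinv x)) else x end).
  intros [x|] [y|]; repeat destruct excluded_middle_informative as [[? <-]|?];
    rewrite ?Hjinv; intro E; try apply Hj in E; try congruence; exfalso; eauto.
Qed.

Lemma card_le_nat_remove_point {X} (m : X) : card_le nat X -> card_le nat {x | x <> m}.
Proof.
  intros [j Hj].
  set (j' := fun n => if excluded_middle_informative (j (2 * n) = m)
                      then j (2 * n + 1) else j (2 * n)).
  assert (Hj'm : forall n, j' n <> m).
  { intro n; unfold j'; destruct excluded_middle_informative as [E|E]; auto.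
    intro E'. rewrite <- E' in E. apply Hj in E. lia. }
  exists (fun n => exist _ (j' n) (Hj'm n)).
  intros a b E. apply (f_equal (@proj1_sig _ _)) in E; simpl in E. unfold j' in E.
  repeat destruct excluded_middle_informative; apply Hj in E; lia.
Qed.

Lemma card_le_remove_point {X} (m : X) : card_le nat X -> card_le X {x | x <> m}.
Proof.
  intros Hinf. eapply card_le_trans; [|apply card_le_option, card_le_nat_remove_point, Hinf].
  exists (fun x => match excluded_middle_informative (x = m) with
                   | left _ => None
                   | right H => Some (exist _ x H) end).
  intros x y; repeat destruct excluded_middle_informative; intro E; congruence.
Qed.

Lemma card_le_nat_add_point {X} (P : X -> Prop) (c : X) :
  card_le nat {x | P x \/ x = c} -> card_le nat {x | P x}.
Proof.
  intros Hinf. pose (c' := exist (fun x => P x \/ x = c) c (or_intror eq_refl)).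
  eapply card_le_trans; [exact (card_le_trans _ _ _ Hinf (card_le_remove_point c' Hinf))|].
  assert (HP : forall y : {y | y <> c'}, P (proj1_sig (proj1_sig y))).
  { intros [[x [Px|<-]] Hx]; [exact Px|]. exfalso. apply Hx, proj1_sig_inj. reflexivity. }
  exists (fun y => exist P _ (HP y)).
  intros a b E. apply (f_equal (@proj1_sig _ _)) in E. apply proj1_sig_inj, proj1_sig_inj, E.
Qed.

Record well_order {T} (lt : T -> T -> Prop) : Prop := {
  wo_wf : well_founded lt;
  wo_irrefl : forall x, ~ lt x x;
  wo_trans : forall x y z, lt x y -> lt y z -> lt x z;
  wo_total : forall x y, lt x y \/ x = y \/ lt y x }.

Definition le_of {T} (lt : T -> T -> Prop) (x y : T) : Prop := lt x y \/ x = y.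

Lemma well_order_inverse_image {A B} (lt : B -> B -> Prop) (f : A -> B) :
  injective f -> well_order lt -> well_order (fun a b => lt (f a) (f b)).
Proof.
  intros Hf [wf irr tr tot]; split.
  - exact (wf_inverse_image _ _ lt f wf).
  - intro; apply irr.
  - intros; eauto.
  - intros a b; destruct (tot (f a) (f b)) as [H|[H|H]]; auto.
Qed.

Lemma well_order_sig {T} (lt : T -> T -> Prop) (P : T -> Prop) :
  well_order lt -> well_order (fun a b : {x | P x} => lt (proj1_sig a) (proj1_sig b)).
Proof. apply well_order_inverse_image; exact proj1_sig_inj. Qed.

Definition lex_order {A B} (ltA : A -> A -> Prop) (ltB : B -> B -> Prop) (p q : A * B) : Prop :=
  ltA (fst p) (fst q) \/ (fst p = fst q /\ ltB (snd p) (snd q)).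

Lemma well_order_lex {A B} (ltA : A -> A -> Prop) (ltB : B -> B -> Prop) :
  well_order ltA -> well_order ltB -> well_order (lex_order ltA ltB).
Proof.
  intros [wfA irrA trA totA] [wfB irrB trB totB]; unfold lex_order; split.
  - intros [a b]. revert b. induction a as [a IHa] using (well_founded_ind wfA).
    intro b. induction b as [b IHb] using (well_founded_ind wfB).
    constructor. intros [a' b'] [H|[E H]]; simpl in *; [apply IHa; auto | subst; apply IHb; auto].
  - intros [a b] [H|[_ H]]; [eapply irrA | eapply irrB]; eauto.
  - intros [a1 a2] [b1 b2] [c1 c2]; simpl; intros [H|[E H]] [H'|[E' H']]; subst; eauto.
  - intros [a1 a2] [b1 b2]; simpl.
    destruct (totA a1 b1) as [H|[<-|H]]; auto.
    destruct (totB a2 b2) as [H|[<-|H]]; auto.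
Qed.

Section WellOrder.

Context {T : Type} (lt : T -> T -> Prop) (wo : well_order lt).

Lemma exists_least (P : T -> Prop) :
  (exists x, P x) -> exists z, P z /\ forall w, P w -> ~ lt w z.
Proof.
  intros [x Px]. apply NNPP; intro N. revert Px.
  induction x as [x IH] using (well_founded_ind (wo_wf _ wo)).
  intro Px. apply N. exists x. split; auto. intros w Pw Hw. exact (IH w Hw Pw).
Qed.

(* "Finite" means Dedekind-finite: [~ card_le nat T]. *)
Lemma finite_exists_greatest (P : T -> Prop) : ~ card_le nat T ->
  (exists x, P x) -> exists z, P z /\ forall w, P w -> ~ lt z w.
Proof.
  intros Hfin [x0 Px0]. apply NNPP; intro N.
  assert (Hnext : forall z : {z | P z}, exists w : {w | P w}, lt (proj1_sig z) (proj1_sig w)).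
  { intros [z Pz]. apply NNPP; intro N2. apply N. exists z. split; auto.
    intros w Pw Hzw. apply N2. exists (exist P w Pw); exact Hzw. }
  destruct (choice _ Hnext) as [next Hnext'].
  pose (u n := proj1_sig (Nat.iter n next (exist P x0 Px0))).
  assert (Hu : forall n m, n < m -> lt (u n) (u m)).
  { intros n m Hnm; induction Hnm; [apply Hnext'|].
    eapply (wo_trans _ wo); [exact IHHnm | apply Hnext']. }
  apply Hfin. exists u. intros n m E.
  destruct (Nat.lt_trichotomy n m) as [H|[H|H]]; auto; apply Hu in H; rewrite E in H;
    exfalso; exact (wo_irrefl _ wo _ H).
Qed.

Lemma finite_of_exists_greatest :
  (forall P : T -> Prop, (exists x, P x) -> exists z, P z /\ forall w, P w -> ~ lt z w) ->
  ~ card_le nat T.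
Proof.
  intros Hgreatest.
  assert (Hclosed : forall z, ~ card_le nat {w | le_of lt w z}).
  { intro z. induction z as [z IH] using (well_founded_ind (wo_wf _ wo)).
    intros Hinf. apply card_le_nat_add_point in Hinf.
    destruct (classic (exists w, lt w z)) as [Hne|Hempty].
    - destruct (Hgreatest _ Hne) as [m [Hm Hmax]].
      apply (IH m Hm). eapply card_le_trans; [exact Hinf|]. apply card_le_subset.
      intros w Hw. destruct (wo_total _ wo w m) as [H|[H|H]]; [left | right | ]; auto.
      exfalso. exact (Hmax w Hw H).
    - destruct Hinf as [h _]. apply Hempty. exact (ex_intro _ _ (proj2_sig (h 0))). }
  intros [h Hh].
  destruct (Hgreatest (fun w => exists n, h n = w)) as [M [_ HM]]; [now exists (h 0), 0|].
  assert (Hbelow : forall n, le_of lt (h n) M).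
  { intro n. destruct (wo_total _ wo (h n) M) as [H|[H|H]]; [left | right | ]; auto.
    exfalso. apply (HM (h n)); eauto. }
  apply (Hclosed M). exists (fun n => exist _ (h n) (Hbelow n)).
  intros a b E. apply Hh. exact (f_equal (@proj1_sig _ _) E).
Qed.

Lemma le_of_trans x y z : le_of lt x y -> le_of lt y z -> le_of lt x z.
Proof.
  intros [H|<-] [H'|<-]; [left; exact (wo_trans _ wo _ _ _ H H') | left | left | right]; auto.
Qed.

Lemma le_of_lt_trans x y z : le_of lt x y -> lt y z -> lt x z.
Proof. intros [H|<-] H'; [exact (wo_trans _ wo _ _ _ H H') | exact H']. Qed.

End WellOrder.

Lemma finite_prod {T} (lt : T -> T -> Prop) :
  well_order lt -> ~ card_le nat T -> ~ card_le nat (T * T).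
Proof.
  intros wo Hfin. apply (finite_of_exists_greatest (lex_order lt lt)); [now apply well_order_lex|].
  intros P [[x1 x2] Px].
  destruct (finite_exists_greatest lt wo (fun a => exists b, P (a, b)) Hfin) as [a [[b0 Hb0] Ha]];
    [eauto|].
  destruct (finite_exists_greatest lt wo (fun b => P (a, b)) Hfin) as [b [Hb Hbmax]]; [eauto|].
  exists (a, b). split; auto. intros [c d] Pcd [H|[E H]]; simpl in *.
  - apply (Ha c); eauto.
  - subst. exact (Hbmax d Pcd H).
Qed.

Section Rank.

Context {X T : Type} (R : X -> X -> Prop) (lt : T -> T -> Prop).
Hypotheses (woR : well_order R) (wo : well_order lt).
Variable t0 : T.

(* [t0] is only a default for [epsilon]: [rank_spec] shows the least bound always exists. *)
Definition rank_step (p : X) (rec : forall q, R q p -> T) : T :=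
  epsilon (inhabits t0) (fun z => (forall q (H : R q p), lt (rec q H) z) /\
     forall w, (forall q (H : R q p), lt (rec q H) w) -> ~ lt w z).

Definition rank : X -> T := Fix (wo_wf _ woR) (fun _ => T) rank_step.

Lemma rank_eq p : rank p = rank_step p (fun q _ => rank q).
Proof.
  unfold rank. apply (Fix_eq _ (fun _ => T) rank_step). intros x f g Hfg. f_equal.
  apply functional_extensionality_dep; intro y.
  apply functional_extensionality_dep; intro Hy. apply Hfg.
Qed.

Hypothesis small_segments : forall p, ~ card_le T {q | R q p}.

Lemma rank_spec p :
  (forall q, R q p -> lt (rank q) (rank p)) /\
  (forall w, lt w (rank p) -> exists q, R q p /\ rank q = w).
Proof.
  induction p as [p IH] using (well_founded_ind (wo_wf _ woR)).
  pose (Img w := exists q, R q p /\ rank q = w).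
  assert (Img_down : forall w v, lt w v -> Img v -> Img w).
  { intros w v Hwv [q [Hq <-]]. destruct (proj2 (IH q Hq) w Hwv) as [q' [Hq' <-]].
    exists q'; split; [exact (wo_trans _ woR _ _ _ Hq' Hq) | reflexivity]. }
  assert (above_Img : forall w, ~ Img w -> forall q, R q p -> lt (rank q) w).
  { intros w Nw q Hq. destruct (wo_total _ wo (rank q) w) as [H|[H|H]]; auto; exfalso; apply Nw.
    - exists q; auto.
    - eapply Img_down; [exact H | exists q; auto]. }
  assert (Img_proper : exists w, ~ Img w).
  { apply NNPP; intro N. apply (small_segments p).
    assert (Hsurj : forall w, exists q : {q | R q p}, rank (proj1_sig q) = w).
    { intro w. apply NNPP; intro N'. apply N. exists w. intros [q [Hq E]].
      apply N'. exists (exist _ q Hq); exact E. }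
    destruct (choice _ Hsurj) as [sec Hsec].
    exists sec. intros w w' E. rewrite <- (Hsec w), <- (Hsec w'), E. reflexivity. }
  assert (Hspec : (forall q, R q p -> lt (rank q) (rank p)) /\
                  (forall w, (forall q, R q p -> lt (rank q) w) -> ~ lt w (rank p))).
  { rewrite rank_eq. unfold rank_step. apply epsilon_spec.
    apply (exists_least lt wo). destruct Img_proper as [w0 Hw0].
    exists w0. exact (above_Img w0 Hw0). }
  split; [exact (proj1 Hspec)|].
  intros w Hw. apply NNPP; intro N. exact (proj2 Hspec w (above_Img w N) Hw).
Qed.

Lemma card_le_of_small_segments : card_le X T.
Proof.
  exists rank. intros p q E. destruct (wo_total _ woR p q) as [H|[H|H]]; auto; exfalso.
  - apply (proj1 (rank_spec q)) in H. rewrite E in H. exact (wo_irrefl _ wo _ H).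
  - apply (proj1 (rank_spec p)) in H. rewrite E in H. exact (wo_irrefl _ wo _ H).
Qed.

End Rank.

Section PairOrder.

Context {T : Type} (lt : T -> T -> Prop) (wo : well_order lt).

Definition max_of (a b : T) : T := if excluded_middle_informative (lt a b) then b else a.

Lemma le_max_of_l a b : le_of lt a (max_of a b).
Proof. unfold max_of, le_of. destruct excluded_middle_informative; auto. Qed.

Lemma le_max_of_r a b : le_of lt b (max_of a b).
Proof.
  unfold max_of, le_of. destruct excluded_middle_informative; auto.
  destruct (wo_total _ wo a b) as [H|[H|H]]; auto; contradiction.
Qed.

(* Goedel's well-order of [T * T]: first by the larger coordinate, then lexicographically.
   Its initial segments lie in squares of initial segments of [T]. *)
Definition pair_order (p q : T * T) : Prop :=
  lex_order lt (lex_order lt lt) (max_of (fst p) (snd p), p) (max_of (fst q) (snd q), q).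

Lemma well_order_pair_order : well_order pair_order.
Proof.
  apply (well_order_inverse_image _ (fun p => (max_of (fst p) (snd p), p))).
  - intros p q E. injection E; auto.
  - apply well_order_lex; [|apply well_order_lex]; exact wo.
Qed.

Lemma pair_order_bound q p : pair_order q p ->
  le_of lt (fst q) (max_of (fst p) (snd p)) /\ le_of lt (snd q) (max_of (fst p) (snd p)).
Proof.
  intros Hqp. assert (Hmax : le_of lt (max_of (fst q) (snd q)) (max_of (fst p) (snd p))).
  { destruct Hqp as [H|[H _]]; [left | right]; exact H. }
  split; (eapply le_of_trans; [exact wo| |exact Hmax]); [apply le_max_of_l | apply le_max_of_r].
Qed.

End PairOrder.

Section Hessenberg.

Context {T : Type} (lt : T -> T -> Prop) (wo : well_order lt).
Hypothesis T_infinite : card_le nat T.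
Hypothesis small_segments : forall x, ~ card_le T {y | lt y x}.

Lemma exists_gt m : exists t, lt m t.
Proof.
  apply NNPP; intro N. apply (small_segments m).
  eapply card_le_trans; [exact (card_le_remove_point m T_infinite)|]. apply card_le_subset.
  intros t Ht.
  destruct (wo_total _ wo t m) as [H|[H|H]]; [exact H | contradiction | exfalso; eauto].
Qed.

Lemma card_le_square_of_segments :
  (forall t, card_le nat {y | lt y t} -> card_le ({y | lt y t} * {y | lt y t}) {y | lt y t}) ->
  card_le (T * T) T.
Proof.
  intros IH. pose proof T_infinite as [j _].
  apply (card_le_of_small_segments (pair_order lt) lt (well_order_pair_order lt wo) wo (j 0)).
  intros p Hp. destruct (exists_gt (max_of lt (fst p) (snd p))) as [t Ht].
  assert (Hbelow : forall q, pair_order lt q p -> lt (fst q) t /\ lt (snd q) t).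
  { intros q Hq. destruct (pair_order_bound lt wo q p Hq) as [H1 H2].
    split; eapply le_of_lt_trans; eauto. }
  assert (Hsquare : card_le {q | pair_order lt q p} ({y | lt y t} * {y | lt y t})).
  { exists (fun q => (exist _ (fst (proj1_sig q)) (proj1 (Hbelow _ (proj2_sig q))),
                     exist _ (snd (proj1_sig q)) (proj2 (Hbelow _ (proj2_sig q))))).
    intros [[a b] Hab] [[c d] Hcd] E. injection E as -> ->. apply proj1_sig_inj; reflexivity. }
  destruct (classic (card_le nat {y | lt y t})) as [Hinf|Hfin].
  - apply (small_segments t).
    eapply card_le_trans; [exact Hp|]. eapply card_le_trans; [exact Hsquare | exact (IH t Hinf)].
  - apply (finite_prod _ (well_order_sig lt _ wo) Hfin).
    eapply card_le_trans; [exact T_infinite|]. eapply card_le_trans; [exact Hp | exact Hsquare].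
Qed.

End Hessenberg.

Lemma card_le_nested_segment {T} (lt : T -> T -> Prop) x (s : {y | lt y x}) :
  card_le {w : {y | lt y x} | lt (proj1_sig w) (proj1_sig s)} {y | lt y (proj1_sig s)}.
Proof.
  exists (fun w => exist (fun y => lt y (proj1_sig s)) (proj1_sig (proj1_sig w)) (proj2_sig w)).
  intros a b E. apply proj1_sig_inj, proj1_sig_inj. exact (f_equal (@proj1_sig _ _) E).
Qed.

Lemma card_le_segment_nested {T} (lt : T -> T -> Prop) x (s : {y | lt y x}) :
  well_order lt ->
  card_le {y | lt y (proj1_sig s)} {w : {y | lt y x} | lt (proj1_sig w) (proj1_sig s)}.
Proof.
  intros wo.
  assert (H : forall y, lt y (proj1_sig s) -> lt y x).
  { intros y Hy. exact (wo_trans _ wo _ _ _ Hy (proj2_sig s)). }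
  exists (fun y => exist (fun w : {y | lt y x} => lt (proj1_sig w) (proj1_sig s))
                    (exist _ (proj1_sig y) (H _ (proj2_sig y))) (proj2_sig y)).
  intros a b E. apply proj1_sig_inj.
  exact (f_equal (fun w => proj1_sig (proj1_sig w)) E).
Qed.

(* By induction on [x]: an infinite segment [{y | lt y x}] either has the cardinality of a
   shorter segment, or is itself an infinite initial ordinal. *)
Theorem hessenberg {T} (lt : T -> T -> Prop) :
  well_order lt -> card_le nat T -> (forall x, ~ card_le T {y | lt y x}) -> card_le (T * T) T.
Proof.
  intros wo Hinf Hsmall. apply (card_le_square_of_segments lt wo Hinf Hsmall).
  intro x. induction x as [x IH] using (well_founded_ind (wo_wf _ wo)). intros Hx.
  destruct (exists_least lt wo (fun c => card_le {y | lt y x} {y | lt y c})) as [c [Hc Hcmin]];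
    [exists x; apply card_le_refl|].
  destruct (wo_total _ wo c x) as [Hcx|[<-|Hcx]].
  - eapply card_le_trans; [exact (card_le_prod _ _ _ _ Hc Hc)|].
    eapply card_le_trans; [exact (IH c Hcx (card_le_trans _ _ _ Hx Hc))|].
    apply card_le_subset. intros y Hy. exact (wo_trans _ wo _ _ _ Hy Hcx).
  - apply (card_le_square_of_segments _ (well_order_sig lt _ wo) Hx).
    + intros s Hs. apply (Hcmin (proj1_sig s)); [|exact (proj2_sig s)].
      eapply card_le_trans; [exact Hs | apply card_le_nested_segment].
    + intros t Ht.
      pose proof (card_le_nested_segment lt c t) as Ht'.
      eapply card_le_trans; [exact (card_le_prod _ _ _ _ Ht' Ht')|].
      eapply card_le_trans; [exact (IH _ (proj2_sig t) (card_le_trans _ _ _ Ht Ht'))|].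
      exact (card_le_segment_nested lt c t wo).
  - exfalso. exact (Hcmin x (card_le_refl _) Hcx).
Qed.

Lemma initial_ordinal_well_order {L} (lt : L -> L -> Prop) : initial_ordinal lt -> well_order lt.
Proof. intros [wf [irr [tr [tot _]]]]; split; assumption. Qed.

Lemma initial_ordinal_small_segments {L} (lt : L -> L -> Prop) :
  initial_ordinal lt -> forall x, ~ card_le L {y | lt y x}.
Proof. intros [_ [_ [_ [_ Hseg]]]] x. exact (proj2 (Hseg x)). Qed.

Section Dominating.

Context {L : Type} (lt : L -> L -> Prop).
Hypothesis L_initial : initial_ordinal lt.
Hypothesis L_infinite : card_le nat L.

Let wo : well_order lt := initial_ordinal_well_order lt L_initial.
Let small_segments := initial_ordinal_small_segments lt L_initial.

Lemma exists_gt2 x y : exists z, lt x z /\ lt y z.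
Proof.
  destruct (exists_gt lt wo L_infinite small_segments (max_of lt x y)) as [z Hz].
  exists z; split; eapply (le_of_lt_trans lt wo);
    [apply le_max_of_l | exact Hz | apply (le_max_of_r lt wo) | exact Hz].
Qed.

Lemma card_le_blocks I : card_le I L -> card_le (I * L) L.
Proof.
  intros HI. eapply card_le_trans; [exact (card_le_prod _ _ _ _ HI (card_le_refl L))|].
  exact (hessenberg lt wo L_infinite small_segments).
Qed.

Lemma not_le_star_of_block {X} (u : X -> L) (f g : L -> L) :
  injective u -> card_le L X -> (forall x, lt (g (u x)) (f (u x))) -> ~ le_star lt f g.
Proof.
  intros Hu HX Hgf [_ Hsmall]. apply Hsmall. eapply card_le_trans; [exact HX|].
  exists (fun x => exist _ (u x) (Hgf x)).
  intros x y E. apply Hu. exact (f_equal (@proj1_sig _ _) E).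
Qed.

Theorem dominating_not_card_le (D : (L -> L) -> Prop) :
  dominating lt D -> ~ card_le {g | D g} L.
Proof.
  intros HD HDL. destruct (card_le_blocks _ HDL) as [u Hu].
  pose proof L_infinite as [j _].
  destruct (exists_extension u (fun ga z => lt (proj1_sig (fst ga) (u ga)) z) Hu (inhabits (j 0)))
    as [f Hf].
  { intro ga. destruct (exists_gt2 (proj1_sig (fst ga) (u ga)) (j 0)) as [z [Hz _]]; eauto. }
  destruct (HD f) as [g [Dg Hle]].
  refine (not_le_star_of_block (fun a => u (exist D g Dg, a)) f g _ (card_le_refl L) _ Hle).
  - intros a b E. apply Hu in E. now injection E.
  - intro a. exact (Hf (exist D g Dg, a)).
Qed.

Theorem cofinal_dominating_not_card_le (D : (L -> L) -> Prop) :
  dominating lt D ->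
  (forall D', dominating lt D' -> card_le {g | D g} {g | D' g}) ->
  forall R : {g | D g} -> {g | D g} -> Prop, initial_ordinal R ->
  forall S, cofinal R S -> ~ card_le {x : {g | D g} | S x} L.
Proof.
  intros HD Hmin R HR S HS HSL. destruct (card_le_blocks _ HSL) as [u Hu].
  pose (Below (s : {x | S x}) h :=
          exists g : {g | D g}, R g (proj1_sig s) /\ h = (fun a => proj1_sig g (u (s, a)))).
  assert (Hescape : forall s, exists k, forall h, Below s h -> ~ le_star lt k h).
  { intro s. apply NNPP; intro N. apply (initial_ordinal_small_segments R HR (proj1_sig s)).
    eapply card_le_trans; [apply (Hmin (Below s)) | apply card_le_image].
    intros k. apply NNPP; intro N'. apply N. exists k. intros h Hh Hle. apply N'. eauto. }
  destruct (choice _ Hescape) as [K HK].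
  pose proof L_infinite as [j _].
  destruct (exists_extension u (fun sa z => lt (K (fst sa) (snd sa)) z /\
                                          lt (proj1_sig (proj1_sig (fst sa)) (u sa)) z)
              Hu (inhabits (j 0)) (fun sa => exists_gt2 _ _)) as [f Hf].
  destruct (HD f) as [g [Dg Hle]].
  destruct (HS (exist D g Dg)) as [y [Sy [<- | Hgy]]];
    pose (s := exist S _ Sy); assert (Hus : injective (fun a => u (s, a)))
      by (intros a b E; apply Hu in E; now injection E).
  - refine (not_le_star_of_block (fun a => u (s, a)) f g Hus (card_le_refl L) _ Hle).
    intro a. exact (proj2 (Hf (s, a))).
  - assert (Hbelow : Below s (fun a => g (u (s, a)))) by (exists (exist D g Dg); auto).
    destruct (card_le_of_not_lt _ (HK s _ Hbelow)) as [v Hv].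
    refine (not_le_star_of_block (fun a : {a | lt (g (u (s, a))) (K s a)} => u (s, proj1_sig a))
              f g _ _ _ Hle).
    + intros a b E. exact (proj1_sig_inj _ _ (Hus _ _ E)).
    + exists v; exact Hv.
    + intros [a Ha]. exact (wo_trans _ wo _ _ _ Ha (proj1 (Hf (s, a)))).
Qed.

End Dominating.

Theorem claim3p2 (L : Type) (lt : L -> L -> Prop)
  (Hcard : initial_ordinal lt) (Hsing : singular lt) :
  (forall D, dominating lt D -> ~ card_le {g : L -> L | D g} L) /\
  (forall D, dominating lt D ->
     (forall D', dominating lt D' -> card_le {g : L -> L | D g} {g : L -> L | D' g}) ->
     forall R : {g : L -> L | D g} -> {g : L -> L | D g} -> Prop,
       initial_ordinal R ->
       forall S, cofinal R S -> ~ card_le {x : {g : L -> L | D g} | S x} L).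
Proof.
  destruct Hsing as [L_infinite _]. split.
  - exact (dominating_not_card_le lt Hcard L_infinite).
  - exact (cofinal_dominating_not_card_le lt Hcard L_infinite).
Qed.
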